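(* Let $\Omega=(a,b)$, let $S_h$ be a finite-dimensional subspace of $L^2(\Omega)$ and $\mathbf L_h:S_h\to S_h$ a linear operator that is self-adjoint and positive definite with respect to the $L^2(\Omega)$ inner product. Let $0<\gamma<1$, $K_\gamma>0$, $t>0$, $\sigma>0$, $\tau_1>0$, $N_1$ a positive integer and $\beta\in\mathbb R$. Set $z(p)=\sigma(ip+1)^2$ for $p\in\mathbb R$, $p_k=k\tau_1$, $z_k=z(p_k)$, $z_k'=z'(p_k)$, and for $v\in S_h$ define $$\Pi_{N_1}^{\gamma,\beta}v=\frac{t^{\beta-1}\tau_1}{2\pi i}\sum_{k=-N_1}^{N_1}z_k'e^{z_k}z_k^{\gamma-\beta}\left(z_k^{\gamma}\mathbf I+K_\gamma t^\gamma\mathbf L_h\right)^{-1}v,$$ with principal branches of the powers. If $\beta\ge\frac12$ and $\tau_1\le1$, then $$\left\|\Pi_{N_1}^{\gamma,\beta}v\right\|_{L^2(\Omega)}\lesssim\frac{t^{\beta-1}}{2\pi}e^{\sigma}\sigma^{-\beta+1}\|v\|_{L^2(\Omega)}\quad\text{for all }v\in S_h,$$ where the implicit constant is independent of $v$, $t$, $N_1$ and $\tau_1$.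
   Context: $A\lesssim B$ means $A\le CB$ for a constant $C$ not depending on the quantities indicated. *)

From HB Require Import structures.
From mathcomp Require Import all_boot all_order all_algebra.
From mathcomp Require Import all_classical all_reals all_analysis.
From mathcomp Require Import complex.
Set Implicit Arguments. Unset Strict Implicit. Unset Printing Implicit Defensive.
Import Order.TTheory GRing.Theory Num.Theory.
Local Open Scope ring_scope.
Local Open Scope classical_set_scope.
Local Open Scope complex_scope.

Section ComplexFun.
Variable R : realType.
Local Open Scope complex_scope.

Definition cmod (z : R[i]) : R := Num.sqrt (complex.Re z ^+ 2 + complex.Im z ^+ 2).

(** principal argument, in (-pi, pi] *)
Definition carg (z : R[i]) : R :=
  if (0 <= complex.Im z)%R then acos (complex.Re z / cmod z) else (- acos (complex.Re z / cmod z))%R.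

Definition cexp (z : R[i]) : R[i] :=
  (expR (complex.Re z) * cos (complex.Im z)) +i* (expR (complex.Re z) * sin (complex.Im z)).

(** principal power z^s = exp(s Log z) = |z|^s e^{i s arg z}, for real s *)
Definition cpow (z : R[i]) (s : R) : R[i] :=
  (powR (cmod z) s * cos (s * carg z)) +i* (powR (cmod z) s * sin (s * carg z)).

(** contour z(p) = sigma (i p + 1)^2 and its derivative z'(p) = 2 sigma i (i p + 1) *)
Definition zc (sig p : R) : R[i] := sig%:C * ('i * p%:C + 1) ^+ 2.
Definition dzc (sig p : R) : R[i] := (2 * sig)%:C * 'i * ('i * p%:C + 1).
End ComplexFun.

(** * The finite-dimensional space S_h = span (phi_0, ..., phi_{n-1}) in L^2(a,b) *)
Section L2Space.
Variables (R : realType) (a b : R) (n : nat) (phi : 'I_n -> R -> R).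

Definition ip (f g : R -> R) : R :=
  Rintegral (@lebesgue_measure R) `]a, b[ (fun x => f x * g x).

Definition vecf (c : 'cV[R]_n) : R -> R := fun x => \sum_(i < n) c i 0 * phi i x.

Definition L2norm (c : 'cV[R]_n) : R := Num.sqrt (ip (vecf c) (vecf c)).

(** L^2(a,b) norm of a complex element of (complexified) S_h:
    || u ||^2 = int_a^b |u|^2 = || Re u ||^2 + || Im u ||^2 *)
Definition L2normC (w : 'cV[R[i]]_n) : R :=
  Num.sqrt (ip (vecf (map_mx (@complex.Re R) w)) (vecf (map_mx (@complex.Re R) w))
          + ip (vecf (map_mx (@complex.Im R) w)) (vecf (map_mx (@complex.Im R) w))).

(** coordinates of Pi_{N1}^{gamma,beta} v, where v has coordinates c and
    L_h has matrix A (L_h (vecf c) = vecf (A *m c)).  The index k in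
    'I_(2 N1 + 1) stands for k - N1 in {-N1, ..., N1}. *)
Definition PiN (A : 'M[R]_n) (gam Kg t sig tau1 beta : R) (N1 : nat)
    (c : 'cV[R]_n) : 'cV[R[i]]_n :=
  let AC := map_mx (real_complex R) A in
  let cC := map_mx (real_complex R) c in
  ((((powR t (beta - 1) * tau1) / (2 * pi))%:C / 'i)%C *:
    \sum_(k < (2 * N1).+1)
      (let p := ((k%:R - N1%:R) * tau1)%R in
       let zk := zc sig p in
       (dzc sig p * cexp zk * cpow zk (gam - beta)) *:
         (invmx ((cpow zk gam)%:M + (Kg * powR t gam)%:C *: AC) *m cC)))%R.
End L2Space.

From HB Require Import structures.
From mathcomp Require Import all_boot all_order all_algebra.
From mathcomp Require Import all_classical all_reals all_analysis.
From mathcomp Require Import complex ring lra.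
Set Implicit Arguments. Unset Strict Implicit. Unset Printing Implicit Defensive.
Import Order.TTheory GRing.Theory Num.Theory.
Local Open Scope ring_scope.
Local Open Scope complex_scope.

(* The L^2 inner product restricted to S_h is a positive semidefinite symmetric
   form, so the L^2 norm of complexified elements of S_h obeys the triangle
   inequality and scales by the modulus.  Since L_h is self-adjoint and
   nonnegative, the pencil w + s L_h (s >= 0) is invertible as soon as w lies off
   the half-line (-oo, 0], with inverse bounded by 1 / dist(w, (-oo, 0]); for the
   principal power w = z^gamma, 0 < gamma < 1, that distance is at least
   sin(gamma pi) |z|^gamma.  On the contour |z_k| = sigma (1 + p_k^2) and
   Re z_k = sigma (1 - p_k^2), so for beta >= 1/2 the k-th term of the quadrature
   is O(1 / (1 + p_k^2)), and the Riemann sum tau1 sum_k 1 / (1 + p_k^2) is bounded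
   by a telescoping argument. *)

Lemma discriminant_le0 (R : realFieldType) (a b c : R) : 0 <= c ->
  (forall t, 0 <= a + 2 * t * b + t ^+ 2 * c) -> b ^+ 2 <= a * c.
Proof.
move=> c_ge0 quad_ge0; have a_ge0 : 0 <= a by have := quad_ge0 0; lra.
have [c0|c_neq0] := eqVneq c 0.
  have [->|b_neq0] := eqVneq b 0; first by rewrite expr0n /= mulr_ge0.
  have := quad_ge0 (- (a + 1) / (2 * b)).
  have -> : a + 2 * (- (a + 1) / (2 * b)) * b + (- (a + 1) / (2 * b)) ^+ 2 * c = -1.
    by rewrite c0; field.
  lra.
have c_gt0 : 0 < c by rewrite lt_def c_neq0.
have := quad_ge0 (- b / c).
have -> : a + 2 * (- b / c) * b + (- b / c) ^+ 2 * c = a - b ^+ 2 / c by field.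
by rewrite subr_ge0 ler_pdivrMr.
Qed.

Section SemiInnerProduct.
Variables (R : rcfType) (V : lmodType R) (B : V -> V -> R).
Hypothesis B_addl : forall x y z, B (x + y) z = B x z + B y z.
Hypothesis B_scalel : forall k x y, B (k *: x) y = k * B x y.
Hypothesis B_sym : forall x y, B x y = B y x.
Hypothesis B_ge0 : forall x, 0 <= B x x.

Lemma form_addr x y z : B x (y + z) = B x y + B x z.
Proof. by rewrite B_sym B_addl !(B_sym x). Qed.

Lemma form_scaler k x y : B x (k *: y) = k * B x y.
Proof. by rewrite B_sym B_scalel B_sym. Qed.

Lemma form0l y : B 0 y = 0.
Proof. by rewrite -(scale0r 0) B_scalel mul0r. Qed.

Lemma form_sqrDZ x y k :
  B (x + k *: y) (x + k *: y) = B x x + 2 * k * B x y + k ^+ 2 * B y y.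
Proof. rewrite B_addl !form_addr !B_scalel !form_scaler (B_sym y x); ring. Qed.

Lemma form_cauchy_schwarz x y : B x y ^+ 2 <= B x x * B y y.
Proof. by apply: discriminant_le0 => // t; rewrite -form_sqrDZ. Qed.

Definition seminorm x := Num.sqrt (B x x).

Lemma seminormD x y : seminorm (x + y) <= seminorm x + seminorm y.
Proof.
rewrite -ler_sqr ?nnegrE ?addr_ge0 ?sqrtr_ge0 // sqrrD !sqr_sqrtr //.
rewrite B_addl !form_addr (B_sym y x) -sqrtrM //.
suff : B x y <= Num.sqrt (B x x * B y y) by lra.
apply: le_trans (ler_norm _) _; rewrite -sqrtr_sqr.
exact/ler_wsqrtr/form_cauchy_schwarz.
Qed.

Lemma seminorm_sum (I : Type) (s : seq I) (F : I -> V) :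
  seminorm (\sum_(i <- s) F i) <= \sum_(i <- s) seminorm (F i).
Proof.
elim: s => [|i s IH]; first by rewrite !big_nil /seminorm form0l sqrtr0.
by rewrite !big_cons (le_trans (seminormD _ _)) ?lerD2l.
Qed.

Definition pair_form (x y : V * V) := B x.1 y.1 + B x.2 y.2.

Lemma pair_form_addl x y z : pair_form (x + y) z = pair_form x z + pair_form y z.
Proof. rewrite /pair_form !B_addl; ring. Qed.

Lemma pair_form_scalel k x y : pair_form (k *: x) y = k * pair_form x y.
Proof. rewrite /pair_form !B_scalel; ring. Qed.

Lemma pair_form_sym x y : pair_form x y = pair_form y x.
Proof. by rewrite /pair_form !(B_sym x.1) (B_sym x.2). Qed.

Lemma pair_form_ge0 x : 0 <= pair_form x x.
Proof. exact: addr_ge0. Qed.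
End SemiInnerProduct.

Section ComplexifiedForm.
Variables (R : rcfType) (n : nat) (B : 'cV[R]_n -> 'cV[R]_n -> R) (A : 'M[R]_n).
Hypothesis B_addl : forall x y z, B (x + y) z = B x z + B y z.
Hypothesis B_scalel : forall k x y, B (k *: x) y = k * B x y.
Hypothesis B_sym : forall x y, B x y = B y x.
Hypothesis B_ge0 : forall x, 0 <= B x x.
Hypothesis B_def : forall x, B x x = 0 -> x = 0.
Hypothesis A_sym : forall x y, B (A *m x) y = B x (A *m y).
Hypothesis A_ge0 : forall x, 0 <= B x (A *m x).

Let pair_addl := pair_form_addl B_addl.
Let pair_scalel := pair_form_scalel B_scalel.
Let pair_sym := pair_form_sym B_sym.
Let pair_ge0 := pair_form_ge0 B_ge0.
Let form_addr := form_addr B_addl B_sym.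
Let form_scaler := form_scaler B_scalel B_sym.

Definition realify (w : 'cV[R[i]]_n) : 'cV[R]_n * 'cV[R]_n :=
  (map_mx (@complex.Re R) w, map_mx (@complex.Im R) w).

(* When B is the L^2 form on coordinates, [cnorm] unfolds to [L2normC]. *)
Definition cnorm (w : 'cV[R[i]]_n) := seminorm (pair_form B) (realify w).

Lemma realifyD w1 w2 : realify (w1 + w2) = realify w1 + realify w2.
Proof.
by congr pair; apply/matrixP => i j; rewrite !mxE; case: (w1 i j); case: (w2 i j).
Qed.

Lemma realifyZ (l : R[i]) w : realify (l *: w) =
  (complex.Re l *: (realify w).1 - complex.Im l *: (realify w).2,
   complex.Re l *: (realify w).2 + complex.Im l *: (realify w).1).
Proof.
congr pair; apply/matrixP => i j; rewrite !mxE;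
  by case: l => x y; case: (w i j) => u v /=; ring.
Qed.

Lemma realify_mul_real (M : 'M[R]_n) y :
  realify (map_mx (real_complex R) M *m y) = (M *m (realify y).1, M *m (realify y).2).
Proof.
congr pair; apply/matrixP => i j; rewrite !mxE;
  elim/big_rec2: _ => [|k x1 x2 _ <-] //; rewrite !mxE;
  by case: (y k j) => u v; case: x2 => p q /=; ring.
Qed.

Lemma cnorm_ge0 w : 0 <= cnorm w.
Proof. exact: sqrtr_ge0. Qed.

Lemma cnorm_sqr w : cnorm w ^+ 2 = pair_form B (realify w) (realify w).
Proof. exact/sqr_sqrtr/pair_ge0. Qed.

Lemma cnorm_sum (I : Type) (s : seq I) (F : I -> 'cV[R[i]]_n) :
  cnorm (\sum_(i <- s) F i) <= \sum_(i <- s) cnorm (F i).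
Proof.
have realify0 : realify 0 = 0 by congr pair; apply/matrixP => i j; rewrite !mxE.
by rewrite /cnorm (big_morph realify realifyD realify0) seminorm_sum.
Qed.

Lemma cnormZ (l : R[i]) w : cnorm (l *: w) = Normc.normc l * cnorm w.
Proof.
case: l => x y; rewrite /cnorm /seminorm /= -sqrtrM ?addr_ge0 ?sqr_ge0 //.
congr Num.sqrt; rewrite realifyZ /pair_form /=.
set u := (realify w).1; set v := (realify w).2.
rewrite -!scaleNr !(B_addl, form_addr, B_scalel, form_scaler) (B_sym v u); ring.
Qed.

Lemma cnorm_real (c : 'cV[R]_n) : cnorm (map_mx (real_complex R) c) = seminorm B c.
Proof.
rewrite /cnorm; have -> : realify (map_mx (real_complex R) c) = (c, 0).
  by congr pair; apply/matrixP => i j; rewrite !mxE.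
by rewrite /seminorm /pair_form /= form0l // addr0.
Qed.

Lemma cnorm_eq0 y : cnorm y = 0 -> y = 0.
Proof.
move/(congr1 (fun r => r ^+ 2)); rewrite cnorm_sqr expr0n /pair_form /=.
have := B_ge0 (map_mx (@complex.Re R) y); have := B_ge0 (map_mx (@complex.Im R) y).
move=> Im_ge0 Re_ge0 sum_eq0.
have /matrixP Re0 : map_mx (@complex.Re R) y = 0 by apply: B_def; lra.
have /matrixP Im0 : map_mx (@complex.Im R) y = 0 by apply: B_def; lra.
apply/matrixP => i j; have := Re0 i j; have := Im0 i j; rewrite !mxE.
by case: (y i j) => ? ? /= -> ->.
Qed.

Definition sqdist_nonpos (w : R[i]) :=
  complex.Im w ^+ 2 + Num.max (complex.Re w) 0 ^+ 2.

Definition pencil (w : R[i]) (s : R) := w%:M + s%:C *: map_mx (real_complex R) A.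

Lemma realify_pencil w s y : realify (pencil w s *m y) =
  (complex.Re w *: (realify y).1 - complex.Im w *: (realify y).2
     + s *: (A *m (realify y).1),
   complex.Re w *: (realify y).2 + complex.Im w *: (realify y).1
     + s *: (A *m (realify y).2)).
Proof.
rewrite /pencil mulmxDl mul_scalar_mx -scalemxAl realifyD !realifyZ realify_mul_real /=.
by rewrite !scale0r subr0 addr0.
Qed.

(* Multiplication by i is skew and commutes with the self-adjoint A, so the
   imaginary part of w contributes orthogonally to the real part of the pencil. *)
Lemma pencil_lower_bound w s y : 0 <= s ->
  sqdist_nonpos w * cnorm y ^+ 2 <= cnorm (pencil w s *m y) ^+ 2.
Proof.
move=> s_ge0; rewrite !cnorm_sqr realify_pencil.
case: (realify y) => u v /=; set a := complex.Re w; set b := complex.Im w.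
set P := pair_form B; set x := (u, v); set r := a *: x + s *: (A *m u, A *m v).
have -> : (a *: u - b *: v + s *: (A *m u), a *: v + b *: u + s *: (A *m v)) =
    r + b *: (- v, u).
  by rewrite /r /x; congr pair; apply/matrixP => i j; rewrite !mxE; ring.
have rotation_orth : P r (- v, u) = 0.
  rewrite /P /r /x /pair_form /= -scaleN1r.
  rewrite !(B_addl, B_scalel, form_addr, form_scaler) (B_sym v u) (A_sym u v).
  by rewrite (B_sym (A *m v) u); ring.
have rotation_isometry : P (- v, u) (- v, u) = P x x.
  by rewrite /P /pair_form /= -scaleN1r B_scalel form_scaler; ring.
have real_part : Num.max a 0 ^+ 2 * P x x <= P r r.
  have [a_ge0|a_lt0] := leP 0 a; last by rewrite expr0n mul0r pair_ge0.
  rewrite /r form_sqrDZ // /P !pair_scalel (pair_sym x) pair_scalel.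
  have := pair_ge0 (A *m u, A *m v); have := mulr_ge0 a_ge0 s_ge0.
  have : 0 <= pair_form B x (A *m u, A *m v) by rewrite /pair_form addr_ge0.
  nra.
rewrite form_sqrDZ // rotation_orth rotation_isometry /sqdist_nonpos -/a -/b; lra.
Qed.

Lemma pencil_unitmx w s : 0 <= s -> 0 < sqdist_nonpos w -> pencil w s \in unitmx.
Proof.
move=> s_ge0 d_gt0; rewrite -unitmx_tr -row_free_unit.
apply: inj_row_free => y yM0; apply: trmx_inj; rewrite trmx0; apply: cnorm_eq0.
have My0 : pencil w s *m y^T = 0 by rewrite -[pencil w s]trmxK -trmx_mul yM0 trmx0.
have := pencil_lower_bound w y^T s_ge0; rewrite My0.
rewrite -(scale0r 0) cnormZ Normc.normc0 mul0r expr0n /= pmulr_rle0 // => y_le0.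
by apply/eqP; rewrite -sqrf_eq0 eq_le y_le0 sqr_ge0.
Qed.

Lemma cnorm_pencil_inv w s x : 0 <= s -> 0 < sqdist_nonpos w ->
  Num.sqrt (sqdist_nonpos w) * cnorm (invmx (pencil w s) *m x) <= cnorm x.
Proof.
move=> s_ge0 d_gt0; rewrite -ler_sqr ?nnegrE ?mulr_ge0 ?sqrtr_ge0 ?cnorm_ge0 //.
rewrite exprMn sqr_sqrtr ?(ltW d_gt0) //.
have := pencil_lower_bound w (invmx (pencil w s) *m x) s_ge0.
by rewrite mulKVmx ?pencil_unitmx.
Qed.
End ComplexifiedForm.

Section PrincipalBranch.
Variable R : realType.

Lemma cmodE (z : R[i]) : cmod z = Normc.normc z.
Proof. by case: z. Qed.

Lemma cmodM (x y : R[i]) : cmod (x * y) = cmod x * cmod y.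
Proof. by rewrite !cmodE Normc.normcM. Qed.

Lemma carg_itv (z : R[i]) : - pi <= carg z <= pi.
Proof.
have Re_cmod : -1 <= complex.Re z / cmod z <= 1.
  rewrite -ler_norml; have [->|cmod_neq0] := eqVneq (cmod z) 0.
    by rewrite invr0 mulr0 normr0.
  have cmod_gt0 : 0 < cmod z by rewrite lt_def cmod_neq0 sqrtr_ge0.
  rewrite normrM [`|_^-1|]gtr0_norm ?invr_gt0 // ler_pdivrMr // mul1r -sqrtr_sqr.
  by apply: ler_wsqrtr; rewrite lerDl sqr_ge0.
have := acos_ge0 Re_cmod; have := acos_lepi Re_cmod.
by rewrite /carg; case: ifP => _; lra.
Qed.

Lemma sin_pi_mul_gt0 (g : R) : 0 < g < 1 -> 0 < sin (g * pi).
Proof.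
move=> /andP[g_gt0 g_lt1]; have := pi_gt0 R => pi_gt0.
by apply: sin_gt0_pi; apply/andP; split; nra.
Qed.

Lemma sin_sqr_le_of_cos_lt0 (g th : R) : 0 < g < 1 -> - pi <= th <= pi ->
  cos (g * th) < 0 -> sin (g * pi) ^+ 2 <= sin (g * th) ^+ 2.
Proof.
move=> /andP[g_gt0 g_lt1] th_itv; have pi_gt0 := pi_gt0 R.
rewrite !sin2cos2 -(cos_norm (g * th)) => cos_lt0.
have gth_le : `|g * th| <= g * pi.
  by rewrite normrM gtr0_norm // ler_pM2l // ler_norml.
(* cos decreases on [0, pi] and |g th| <= g pi < pi. *)
have : cos (g * pi) <= cos `|g * th|.
  rewrite leNgt ltr_cos ?in_itv /= ?normr_ge0 ?mulr_ge0 ?ltW // -?leNgt //; nra.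
nra.
Qed.

Lemma cmod_polar (r th : R) : 0 <= r -> cmod ((r * cos th) +i* (r * sin th)) = r.
Proof.
by move=> r_ge0; rewrite /cmod /= !exprMn -mulrDr cos2Dsin2 mulr1 sqrtr_sqr ger0_norm.
Qed.

Lemma cmod_cexp (z : R[i]) : cmod (cexp z) = expR (complex.Re z).
Proof. exact/cmod_polar/expR_ge0. Qed.

Lemma cmod_cpow (z : R[i]) (s : R) : cmod (cpow z s) = powR (cmod z) s.
Proof. exact/cmod_polar/powR_ge0. Qed.

Lemma sqdist_cpow_ge (g : R) (z : R[i]) : 0 < g < 1 ->
  sin (g * pi) * powR (cmod z) g <= Num.sqrt (sqdist_nonpos (cpow z g)).
Proof.
move=> g_itv; have sin_ge0 := ltW (sin_pi_mul_gt0 g_itv).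
rewrite -[X in X <= _]ger0_norm ?mulr_ge0 ?powR_ge0 // -sqrtr_sqr.
apply: ler_wsqrtr; rewrite /sqdist_nonpos /cpow /=.
set P := powR (cmod z) g; set th := g * carg z.
have P_ge0 : 0 <= P by exact: powR_ge0.
have [cos_ge0|cos_lt0] := leP 0 (cos th).
  rewrite max_l ?mulr_ge0 // !exprMn -mulrDr addrC cos2Dsin2 mulr1 mulrC.
  by rewrite ler_piMr ?sqr_ge0 // sin2cos2 lerBlDr lerDl sqr_ge0.
rewrite max_r ?(mulr_ge0_le0 P_ge0 (ltW cos_lt0)) // expr0n addr0 !exprMn mulrC.
rewrite ler_wpM2l ?sqr_ge0 //.
exact/sin_sqr_le_of_cos_lt0/cos_lt0/carg_itv.
Qed.
End PrincipalBranch.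

Section Contour.
Variable R : realType.

Lemma Re_zc (sig p : R) : complex.Re (zc sig p) = sig * (1 - p ^+ 2).
Proof. by rewrite /zc /=; ring. Qed.

Lemma cmod_zc (sig p : R) : 0 <= sig -> cmod (zc sig p) = sig * (1 + p ^+ 2).
Proof.
move=> sig_ge0; rewrite /cmod Re_zc (_ : complex.Im _ = 2 * sig * p); last first.
  by rewrite /zc /=; ring.
rewrite (_ : _ + _ = (sig * (1 + p ^+ 2)) ^+ 2); last by ring.
by rewrite sqrtr_sqr ger0_norm // mulr_ge0 // addr_ge0 ?sqr_ge0.
Qed.

Lemma cmod_dzc (sig p : R) : 0 <= sig ->
  cmod (dzc sig p) = 2 * sig * Num.sqrt (1 + p ^+ 2).
Proof.
move=> sig_ge0; rewrite /cmod /dzc /=.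
rewrite (_ : _ + _ = (2 * sig) ^+ 2 * (1 + p ^+ 2)); last by ring.
by rewrite sqrtrM ?sqr_ge0 // sqrtr_sqr ger0_norm ?mulr_ge0.
Qed.

Lemma sqrt_le_powR (x b : R) : 1 <= x -> 1 / 2 <= b -> Num.sqrt x <= powR x b.
Proof.
move=> x_ge1 b_ge; rewrite -powR12_sqrt ?(le_trans ler01) //.
by apply: ler_powR => //; lra.
Qed.

Lemma expR_Nmul_sqr_le (sig p : R) : 0 < sig ->
  expR (- (sig * p ^+ 2)) <= (1 + sig^-1) / (1 + p ^+ 2).
Proof.
move=> sig_gt0; have x_gt0 : 0 < 1 + p ^+ 2 by rewrite ltr_pwDl ?sqr_ge0.
rewrite expRN ler_pdivlMr // mulrC ler_pdivrMr ?expR_gt0 //.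
apply: le_trans (_ : (1 + sig^-1) * (1 + sig * p ^+ 2) <= _); last first.
  by rewrite ler_wpM2l ?expR_ge1Dx // addr_ge0 ?invr_ge0 ?ltW.
have -> : (1 + sig^-1) * (1 + sig * p ^+ 2) = 1 + p ^+ 2 + sig^-1 + sig * p ^+ 2.
  by field; rewrite gt_eqF.
have := sqr_ge0 p; have : 0 < sig^-1 by rewrite invr_gt0.
nra.
Qed.

Lemma contour_weight_le (gam sig beta p : R) : 0 < sig -> 1 / 2 <= beta ->
  cmod (dzc sig p * cexp (zc sig p) * cpow (zc sig p) (gam - beta))
    / powR (cmod (zc sig p)) gam
  <= 2 * (1 + sig^-1) * expR sig * powR sig (1 - beta) / (1 + p ^+ 2).
Proof.
move=> sig_gt0 beta_ge; set x := 1 + p ^+ 2.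
have x_ge1 : 1 <= x by rewrite lerDl sqr_ge0.
have x_gt0 : 0 < x := lt_le_trans ltr01 x_ge1.
rewrite [cmod (_ * cpow _ _)]cmodM [cmod (dzc _ _ * _)]cmodM.
rewrite cmod_dzc ?cmod_cexp ?cmod_cpow ?cmod_zc ?(ltW sig_gt0) // Re_zc -/x.
have sig_beta_gt0 : 0 < powR sig beta by exact: powR_gt0.
have x_beta_gt0 : 0 < powR x beta by exact: powR_gt0.
have sigx_gam_gt0 : 0 < powR (sig * x) gam by rewrite powR_gt0 ?mulr_gt0.
have sig_neq0 : sig != 0 by rewrite gt_eqF.
have sigx_neq0 : sig * x != 0 by rewrite mulf_neq0 ?gt_eqF.
rewrite !powRB ?sig_neq0 ?sigx_neq0 ?implybT //.
rewrite [powR (sig * x) beta]powRM ?(ltW sig_gt0) ?(ltW x_gt0) //.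
rewrite powRr1 ?(ltW sig_gt0) //.
have -> : sig * (1 - p ^+ 2) = sig + - (sig * p ^+ 2) by ring.
set c := 2 * sig / powR sig beta * expR sig.
have c_ge0 : 0 <= c by rewrite !mulr_ge0 ?expR_ge0 ?invr_ge0 ?ltW.
rewrite expRD.
have -> : 2 * sig * Num.sqrt x * (expR sig * expR (- (sig * p ^+ 2))) *
    (powR (sig * x) gam / (powR sig beta * powR x beta)) / powR (sig * x) gam =
  c * (Num.sqrt x / powR x beta) * expR (- (sig * p ^+ 2)).
  by rewrite /c; field; rewrite !gt_eqF.
have -> : 2 * (1 + sig^-1) * expR sig * (sig / powR sig beta) / x =
  c * 1 * ((1 + sig^-1) / x).
  by rewrite /c; field; rewrite !gt_eqF.
apply: ler_pM; rewrite ?expR_ge0 ?expR_Nmul_sqr_le //.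
  exact: mulr_ge0 c_ge0 (divr_ge0 (sqrtr_ge0 _) (ltW x_beta_gt0)).
by apply: ler_wpM2l; rewrite // ler_pdivrMr // mul1r sqrt_le_powR.
Qed.
End Contour.

Section RiemannSum.
Variable R : realType.

(* Its increments over steps t <= 1 dominate t / (1 + x^2), so it plays the role
   of 8 atan in bounding the Riemann sum of 1 / (1 + x^2) by telescoping. *)
Definition bounded_primitive (y : R) := 8 * y / (1 + `|y|).

Lemma bounded_primitive_le y : `|bounded_primitive y| <= 8.
Proof.
have d_gt0 : 0 < 1 + `|y| by rewrite ltr_pwDl.
rewrite /bounded_primitive normrM normfV (gtr0_norm d_gt0) normrM (@ger0_norm _ 8) //.
by rewrite ler_pdivrMr //; have := normr_ge0 y; lra.
Qed.

Lemma bounded_primitive_increment x t : 0 < t <= 1 ->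
  t / (1 + x ^+ 2) <= bounded_primitive (x + t) - bounded_primitive x.
Proof.
move=> /andP[t_gt0 t_le1]; rewrite /bounded_primitive.
have x2_ge0 := sqr_ge0 x.
have frac_le d : 0 < d -> d <= 8 * (1 + x ^+ 2) -> t / (1 + x ^+ 2) <= 8 * t / d.
  move=> d_gt0 d_le; rewrite ler_pdivrMr ?ltr_pwDl // mulrAC ler_pdivlMr //; nra.
have [x_ge0|x_lt0] := lerP 0 x.
  rewrite (ger0_norm x_ge0) (@ger0_norm _ (x + t)); last lra.
  have -> : 8 * (x + t) / (1 + (x + t)) - 8 * x / (1 + x) =
    8 * t / ((1 + (x + t)) * (1 + x)) by field; lra.
  by apply: frac_le; nra.
have [xt_le0|xt_gt0] := lerP (x + t) 0.
  rewrite (ler0_norm xt_le0) (ltr0_norm x_lt0).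
  have -> : 8 * (x + t) / (1 + - (x + t)) - 8 * x / (1 + - x) =
    8 * t / ((1 - (x + t)) * (1 - x)) by field; lra.
  by apply: frac_le; nra.
rewrite (ltr0_norm x_lt0) (gtr0_norm xt_gt0).
have : 4 * (x + t) <= 8 * (x + t) / (1 + (x + t)) by rewrite ler_pdivlMr; nra.
have : 4 * - x <= - (8 * x / (1 + - x)) by rewrite -mulNr ler_pdivlMr; nra.
have : t / (1 + x ^+ 2) <= t by rewrite ler_pdivrMr; nra.
lra.
Qed.

Lemma riemann_sum_le (t : R) (N : nat) : 0 < t <= 1 ->
  \sum_(k < (2 * N).+1) t / (1 + ((k%:R - N%:R) * t) ^+ 2) <= 16.
Proof.
move=> t_itv; pose H := fun k : nat => bounded_primitive ((k%:R - N%:R) * t).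
apply: le_trans (_ : \sum_(k < (2 * N).+1) (H k.+1 - H k) <= _).
  apply: ler_sum => k _; rewrite /H.
  have -> : (k.+1%:R - N%:R) * t = (k%:R - N%:R) * t + t by rewrite -addn1 natrD; ring.
  exact: bounded_primitive_increment.
rewrite -(big_mkord xpredT (fun k => H k.+1 - H k)) telescope_sumr //.
have := bounded_primitive_le ((((2 * N).+1)%:R - N%:R) * t).
have := bounded_primitive_le ((0%:R - N%:R) * t).
by rewrite /H !ler_norml; lra.
Qed.
End RiemannSum.

Section Quadrature.
Variables (R : realType) (n : nat) (B : 'cV[R]_n -> 'cV[R]_n -> R) (A : 'M[R]_n).
Hypothesis B_addl : forall x y z, B (x + y) z = B x z + B y z.
Hypothesis B_scalel : forall k x y, B (k *: x) y = k * B x y.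
Hypothesis B_sym : forall x y, B x y = B y x.
Hypothesis B_ge0 : forall x, 0 <= B x x.
Hypothesis B_def : forall x, B x x = 0 -> x = 0.
Hypothesis A_sym : forall x y, B (A *m x) y = B x (A *m y).
Hypothesis A_ge0 : forall x, 0 <= B x (A *m x).
Variables (gam Kg sig beta : R).
Hypotheses (gam_itv : 0 < gam < 1) (Kg_gt0 : 0 < Kg) (sig_gt0 : 0 < sig).
Hypothesis beta_ge : 1 / 2 <= beta.

Let K := 2 * (1 + sig^-1) * expR sig * powR sig (1 - beta) / sin (gam * pi).

Let sin_gt0 := sin_pi_mul_gt0 gam_itv.

Lemma quadrature_term_le (t p : R) (x : 'cV[R[i]]_n) : 0 < t ->
  cnorm B ((dzc sig p * cexp (zc sig p) * cpow (zc sig p) (gam - beta)) *: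
     (invmx (pencil A (cpow (zc sig p) gam) (Kg * powR t gam)) *m x))
  <= K * cnorm B x / (1 + p ^+ 2).
Proof.
move=> t_gt0; set z := zc sig p; set w := cpow z gam; set s := Kg * powR t gam.
set l := _ * cpow z _; set y := invmx _ *m x.
have s_ge0 : 0 <= s by rewrite mulr_ge0 ?powR_ge0 ?ltW.
have P_gt0 : 0 < powR (cmod z) gam.
  by rewrite powR_gt0 // cmod_zc ?mulr_gt0 ?ltr_pwDl ?sqr_ge0 ?ltW.
have sector := sqdist_cpow_ge z gam_itv; rewrite -/w in sector.
have d_gt0 : 0 < sqdist_nonpos w.
  by rewrite -sqrtr_gt0 (lt_le_trans _ sector) ?mulr_gt0.
have y_le : cnorm B y <= cnorm B x / (sin (gam * pi) * powR (cmod z) gam).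
  rewrite ler_pdivlMr ?mulr_gt0 // mulrC.
  apply: le_trans (cnorm_pencil_inv B_addl B_scalel B_sym B_ge0 B_def A_sym A_ge0
    x s_ge0 d_gt0).
  by rewrite ler_wpM2r ?cnorm_ge0.
have weight_le := contour_weight_le gam p sig_gt0 beta_ge; rewrite -/z -/l in weight_le.
rewrite cnormZ // -cmodE.
apply: le_trans (_ : cmod l * (cnorm B x / (sin (gam * pi) * powR (cmod z) gam)) <= _).
  by rewrite ler_wpM2l ?sqrtr_ge0.
have -> : cmod l * (cnorm B x / (sin (gam * pi) * powR (cmod z) gam)) =
  cmod l / powR (cmod z) gam * (cnorm B x / sin (gam * pi)).
  by field; rewrite !gt_eqF.
have -> : K * cnorm B x / (1 + p ^+ 2) =
    2 * (1 + sig^-1) * expR sig * powR sig (1 - beta) / (1 + p ^+ 2)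
    * (cnorm B x / sin (gam * pi)).
  by rewrite /K; field; rewrite !gt_eqF ?ltr_pwDl ?sqr_ge0.
by apply: ler_wpM2r; rewrite ?divr_ge0 ?cnorm_ge0 ?(ltW sin_gt0).
Qed.

Lemma cnorm_PiN_le_sum (t tau1 : R) (N1 : nat) (c : 'cV[R]_n) : 0 < t -> 0 < tau1 ->
  cnorm B (PiN A gam Kg t sig tau1 beta N1 c) <=
  powR t (beta - 1) / (2 * pi) * K * seminorm B c *
    \sum_(k < (2 * N1).+1) tau1 / (1 + ((k%:R - N1%:R) * tau1) ^+ 2).
Proof.
move=> t_gt0 tau1_gt0; have pi_gt0 := pi_gt0 R.
set r := powR t (beta - 1) * tau1 / (2 * pi).
have r_ge0 : 0 <= r by rewrite /r !mulr_ge0 ?powR_ge0 ?invr_ge0 ?ltW ?mulr_gt0.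
have cmod_r : cmod (r%:C / 'i) = r.
  rewrite cmodM [cmod ('i^-1)]cmodE Normc.normcV -cmodE (_ : cmod 'i = 1); last first.
    by rewrite /cmod /= expr0n expr1n add0r sqrtr1.
  by rewrite invr1 mulr1 /cmod /= expr0n addr0 sqrtr_sqr ger0_norm.
rewrite /PiN cnormZ // -cmodE cmod_r.
apply: le_trans (ler_wpM2l r_ge0 (cnorm_sum B_addl B_scalel B_sym B_ge0 _ _)) _.
apply: le_trans (ler_wpM2l r_ge0
  (ler_sum _ (fun k _ => quadrature_term_le _ _ t_gt0))) _.
rewrite cnorm_real // /r mulr_sumr mulr_sumr; apply: ler_sum => k _.
have x_gt0 : 0 < 1 + ((k%:R - N1%:R) * tau1) ^+ 2 by rewrite ltr_pwDl ?sqr_ge0.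
rewrite le_eqVlt; apply/orP; left; apply/eqP.
(* [field] would unfold [pi], leaving a side condition [pi != 0] out of reach. *)
by move: pi_gt0; generalize (pi : R) => q q_gt0; field; rewrite !gt_eqF.
Qed.

Lemma cnorm_PiN_le (t tau1 : R) (N1 : nat) (c : 'cV[R]_n) : 0 < t -> 0 < tau1 <= 1 ->
  cnorm B (PiN A gam Kg t sig tau1 beta N1 c) <=
  32 * (1 + sig^-1) / sin (gam * pi) *
    (powR t (beta - 1) / (2 * pi) * expR sig * powR sig (1 - beta) * seminorm B c).
Proof.
move=> t_gt0 /andP[tau1_gt0 tau1_le1].
apply: le_trans (cnorm_PiN_le_sum N1 c t_gt0 tau1_gt0) _.
have pi_gt0 := pi_gt0 R; set T := powR t (beta - 1); set nc := seminorm B c.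
have -> : 32 * (1 + sig^-1) / sin (gam * pi) *
    (T / (2 * pi) * expR sig * powR sig (1 - beta) * nc) = T / (2 * pi) * K * nc * 16.
  rewrite /K; move: pi_gt0 sin_gt0; generalize (pi : R) => q q_gt0 sin_gt0'.
  by field; rewrite !gt_eqF.
apply: ler_wpM2l; last by apply: riemann_sum_le; rewrite tau1_gt0 tau1_le1.
apply: mulr_ge0; last exact: sqrtr_ge0.
apply: mulr_ge0; first by rewrite divr_ge0 ?powR_ge0 ?mulr_ge0 ?(ltW pi_gt0).
by rewrite /K divr_ge0 ?mulr_ge0 ?addr_ge0 ?invr_ge0 ?expR_ge0 ?powR_ge0
  ?(ltW sig_gt0) ?(ltW sin_gt0).
Qed.
End Quadrature.

Section L2Form.
Local Open Scope classical_set_scope.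
Variables (R : realType) (a b : R) (n : nat) (phi : 'I_n -> R -> R).
Hypothesis phi_meas : forall i, measurable_fun `]a, b[ (phi i).
Hypothesis phi_sqr_int : forall i,
  (@lebesgue_measure R).-integrable `]a, b[ (fun x => ((phi i x) ^+ 2)%:E).

Local Notation integrable_ab f :=
  ((@lebesgue_measure R).-integrable `]a, b[ (EFin \o f)).

Let mab : measurable (`]a, b[ : set (measurableTypeR R)).
Proof. exact: measurable_itv. Qed.

Lemma integrable_phi_mul i j : integrable_ab (fun x => phi i x * phi j x).
Proof.
have := integrableD mab (phi_sqr_int i) (phi_sqr_int j).
apply: le_integrable => //.
  apply/measurable_realfun.measurable_EFinP.
  by apply: measurable_realfun.measurable_funM; exact: phi_meas.
move=> x _ /=; rewrite lee_fin [X in _ <= X]ger0_norm ?addr_ge0 ?sqr_ge0 // normrM.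
rewrite -(real_normK (num_real (phi i x))) -(real_normK (num_real (phi j x))).
by have := normr_ge0 (phi i x); have := normr_ge0 (phi j x); nra.
Qed.

Lemma vecf_mulE u v x : vecf phi u x * vecf phi v x =
  \sum_i \sum_j u i 0 * v j 0 * (phi i x * phi j x).
Proof.
rewrite /vecf mulr_suml; apply: eq_bigr => i _; rewrite mulr_sumr.
by apply: eq_bigr => j _; ring.
Qed.

Lemma integrable_vecf_mul u v : integrable_ab (fun x => vecf phi u x * vecf phi v x).
Proof.
have -> : EFin \o (fun x => vecf phi u x * vecf phi v x) =
    fun x => (\sum_i \sum_j (u i 0 * v j 0)%:E * (phi i x * phi j x)%:E)%E.
  apply/funext => x; rewrite /= vecf_mulE -sumEFin; apply: eq_bigr => i _.
  by rewrite -sumEFin; apply: eq_bigr => j _; rewrite EFinM.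
apply: (integrable_sum mab) => i _; apply: (integrable_sum mab) => j _.
exact: integrableZl (integrable_phi_mul i j).
Qed.

Lemma vecfD u v x : vecf phi (u + v) x = vecf phi u x + vecf phi v x.
Proof. by rewrite /vecf -big_split; apply: eq_bigr => i _; rewrite mxE mulrDl. Qed.

Lemma vecfZ k u x : vecf phi (k *: u) x = k * vecf phi u x.
Proof. by rewrite /vecf mulr_sumr; apply: eq_bigr => i _; rewrite mxE mulrA. Qed.

Definition l2form (u v : 'cV[R]_n) := ip a b (vecf phi u) (vecf phi v).

Lemma l2form_addl u v w : l2form (u + v) w = l2form u w + l2form v w.
Proof.
rewrite /l2form /ip -RintegralD ?integrable_vecf_mul //.
by apply: eq_Rintegral => x _; rewrite vecfD mulrDl.
Qed.

Lemma l2form_scalel k u v : l2form (k *: u) v = k * l2form u v.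
Proof.
rewrite /l2form /ip -RintegralZl ?integrable_vecf_mul //.
by apply: eq_Rintegral => x _; rewrite vecfZ mulrA.
Qed.

Lemma l2form_sym u v : l2form u v = l2form v u.
Proof. by apply: eq_Rintegral => x _; rewrite mulrC. Qed.

Lemma l2form_ge0 u : 0 <= l2form u u.
Proof. by apply: Rintegral_ge0 => x _; rewrite -expr2 sqr_ge0. Qed.
End L2Form.

Local Open Scope classical_set_scope.

Theorem lemma8 (R : realType) (a b : R) (n : nat) (phi : 'I_n -> R -> R)
    (A : 'M[R]_n) (gam Kg sig beta : R) :
  a < b ->
  (* S_h = span(phi_i) is a finite-dimensional subspace of L^2(a,b) *)
  (forall i, measurable_fun `]a, b[ (phi i)) ->
  (forall i, (@lebesgue_measure R).-integrable `]a, b[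
                (fun x => ((phi i x) ^+ 2)%:E)) ->
  (forall c : 'cV[R]_n, ip a b (vecf phi c) (vecf phi c) = 0 -> c = 0) ->
  (* L_h (matrix A) is self-adjoint and positive definite in L^2(a,b) *)
  (forall c d : 'cV[R]_n,
     ip a b (vecf phi (A *m c)) (vecf phi d) = ip a b (vecf phi c) (vecf phi (A *m d))) ->
  (forall c : 'cV[R]_n, c != 0 -> 0 < ip a b (vecf phi (A *m c)) (vecf phi c)) ->
  0 < gam < 1 -> 0 < Kg -> 0 < sig -> 1 / 2 <= beta ->
  exists C : R, forall (t tau1 : R) (N1 : nat) (c : 'cV[R]_n),
    0 < t -> 0 < tau1 -> tau1 <= 1 -> (0 < N1)%N ->
    L2normC a b phi (PiN A gam Kg t sig tau1 beta N1 c)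
      <= C * (powR t (beta - 1) / (2 * pi) * expR sig * powR sig (1 - beta)
              * L2norm a b phi c).
Proof.
move=> _ phi_meas phi_sqr_int B_def A_sym A_pos gam_itv Kg_gt0 sig_gt0 beta_ge.
have B_addl := l2form_addl phi_meas phi_sqr_int.
have B_scalel := l2form_scalel phi_meas phi_sqr_int.
have A_ge0 (x : 'cV[R]_n) : 0 <= l2form a b phi x (A *m x).
  have [->|x_neq0] := eqVneq x 0; first by rewrite mulmx0 l2form_sym form0l.
  by rewrite l2form_sym ltW ?A_pos.
exists (32 * (1 + sig^-1) / sin (gam * pi)) => t tau1 N1 c t_gt0 tau1_gt0 tau1_le1 _.
apply: (cnorm_PiN_le B_addl B_scalel (@l2form_sym _ _ _ _ phi) (@l2form_ge0 _ _ _ _ phi)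
  B_def A_sym A_ge0 gam_itv Kg_gt0 sig_gt0 beta_ge _ _ t_gt0).
by rewrite tau1_gt0 tau1_le1.
Qed.
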